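(* For every integer $n\geq 2$, the operator $W_n^{*}$ on $H^2$ is densely Li-Yorke chaotic.
   Context: $H^2$ denotes the Hardy space of analytic functions $f(z)=\sum_{k\ge0}\hat f(k)z^k$ on the open unit disk with $\sum_{k}|\hat f(k)|^2<\infty$. For $n\in\mathbb{N}$, $W_n$ is the bounded operator on $H^2$ given by $W_nf(z)=(1+z+\cdots+z^{n-1})f(z^n)$, and $W_n^{*}$ is its adjoint. An operator $T$ on a Banach space $Y$ is densely Li-Yorke chaotic if there is an uncountable dense set $S\subseteq Y$ such that for all distinct $x,y\in S$, $\liminf_{k\to\infty}\|T^kx-T^ky\|=0$ and $\limsup_{k\to\infty}\|T^kx-T^ky\|=\infty$. *)

From Stdlib Require Import Reals.
From Coquelicot Require Import Coquelicot.
Open Scope R_scope.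

(* H^2 is identified with its Taylor-coefficient sequences
   f = sum_k a k z^k with sum_k |a k|^2 < oo. *)
Definition inH2 (a : nat -> C) : Prop :=
  ex_series (fun k => (Cmod (a k)) ^ 2).

Definition H2norm (a : nat -> C) : R :=
  sqrt (Series (fun k => (Cmod (a k)) ^ 2)).

Definition H2sub (a b : nat -> C) : nat -> C := fun k => Cminus (a k) (b k).

(* W_n f (z) = (1 + z + ... + z^(n-1)) f(z^n): the coefficient of z^(n*k+j),
   j < n, is a k, i.e. (W_n a) m = a (m / n). *)
Definition Wn (n : nat) (a : nat -> C) : nat -> C := fun m => a (Nat.div m n).

Definition is_adjoint_Wn (n : nat) (T : (nat -> C) -> (nat -> C)) : Prop :=
  (forall g, inH2 g -> inH2 (T g)) /\
  (forall f g, inH2 f -> inH2 g ->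
     exists l : C,
       is_series (fun k => Cmult (Wn n f k) (Cconj (g k))) l /\
       is_series (fun k => Cmult (f k) (Cconj (T g k))) l).

Definition uncountable (S : (nat -> C) -> Prop) : Prop :=
  ~ exists h : (nat -> C) -> nat,
      forall x y, S x -> S y -> h x = h y -> x = y.

Definition dense_in_H2 (S : (nat -> C) -> Prop) : Prop :=
  (forall x, S x -> inH2 x) /\
  forall f, inH2 f -> forall eps, 0 < eps ->
    exists s, S s /\ H2norm (H2sub f s) < eps.

Definition densely_LiYorke_chaotic (T : (nat -> C) -> (nat -> C)) : Prop :=
  exists S : (nat -> C) -> Prop,
    uncountable S /\ dense_in_H2 S /\
    forall x y, S x -> S y -> x <> y ->
      LimInf_seq (fun k => H2norm (H2sub (Nat.iter k T x) (Nat.iter k T y)))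
        = Finite 0 /\
      LimSup_seq (fun k => H2norm (H2sub (Nat.iter k T x) (Nat.iter k T y)))
        = p_infty.

From Stdlib Require Import Reals Lia Lra Classical ClassicalEpsilon FunctionalExtensionality.
From Coquelicot Require Import Coquelicot.
Open Scope R_scope.

(* On Taylor coefficients W_n^* is a block-sum operator: (T^m x)_k = sum_(j < n^m) x_(n^m k + j).
   Let p_i = 4 i (i + 1) and let b_i be the bump of height n^(i - p_i) on the n^(p_i) coefficients
   starting at n^(p_i + 1), followed by its negative.  For x = d + sum_i g_i b_i with d finitely
   supported of zero sum:
   - at m = p_i, the block of index n of T^m x is the plateau of b_i, of value n^i g_i;
   - at m = p_i + 2, d and the b_j with j <= i lie in the first block and cancel, while the later
     bumps are so small that even the factor n^m by which T^m can stretch norms does not help.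
   So if g takes some nonzero value infinitely often, ||T^m x|| has liminf 0 and limsup oo.
   The chaotic set consists of vectors d + sum_i psi(pi i) b_i, where pi takes every value
   infinitely often and the parameter psi also encodes d, so that the difference of two distinct
   vectors of the set is such an x.  Free entries of psi make the set uncountable; a small psi
   and d ranging over the dense set of finitely supported zero-sum sequences make it dense. *)

Fixpoint rsum (f : nat -> R) (L : nat) : R :=
  match L with O => 0 | S L => rsum f L + f L end.

Lemma rsum_ext f g L : (forall j, (j < L)%nat -> f j = g j) -> rsum f L = rsum g L.
Proof.
  induction L as [|L IH]; intros H; simpl; [reflexivity|].
  rewrite IH, H; [reflexivity | lia | intros; apply H; lia].
Qed.

Lemma rsum_plus f g L : rsum (fun j => f j + g j) L = rsum f L + rsum g L.
Proof. induction L as [|L IH]; simpl; [lra|]. rewrite IH; ring. Qed.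

Lemma rsum_scal c f L : rsum (fun j => c * f j) L = c * rsum f L.
Proof. induction L as [|L IH]; simpl; [ring|]. rewrite IH; ring. Qed.

Lemma rsum_opp f L : rsum (fun j => - f j) L = - rsum f L.
Proof.
  rewrite (rsum_ext _ (fun j => -1 * f j)) by (intros; ring).
  rewrite rsum_scal; ring.
Qed.

Lemma rsum_minus f g L : rsum (fun j => f j - g j) L = rsum f L - rsum g L.
Proof. unfold Rminus. rewrite rsum_plus, rsum_opp; reflexivity. Qed.

Lemma rsum_le f g L : (forall j, (j < L)%nat -> f j <= g j) -> rsum f L <= rsum g L.
Proof.
  induction L as [|L IH]; intros H; simpl; [lra|].
  pose proof (H L ltac:(lia)). pose proof (IH ltac:(intros; apply H; lia)). lra.
Qed.

Lemma rsum_zero f L : (forall j, (j < L)%nat -> f j = 0) -> rsum f L = 0.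
Proof.
  induction L as [|L IH]; intros H; simpl; [reflexivity|].
  rewrite IH, H; [ring | lia | intros; apply H; lia].
Qed.

Lemma rsum_nonneg f L : (forall j, (j < L)%nat -> 0 <= f j) -> 0 <= rsum f L.
Proof.
  intros H. rewrite <- (rsum_zero (fun _ => 0) L) by reflexivity. now apply rsum_le.
Qed.

Lemma rsum_app f a b : rsum f (a + b) = rsum f a + rsum (fun j => f (a + j)%nat) b.
Proof.
  induction b as [|b IH]; simpl; [rewrite Nat.add_0_r; ring|].
  rewrite Nat.add_succ_r; simpl. rewrite IH; ring.
Qed.

Lemma rsum_single f L i : (i < L)%nat -> (forall j, (j < L)%nat -> j <> i -> f j = 0) ->
  rsum f L = f i.
Proof.
  induction L as [|L IH]; intros Hi H; simpl; [lia|].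
  destruct (Nat.eq_dec i L) as [->|Hne].
  - rewrite rsum_zero; [ring|]. intros; apply H; lia.
  - rewrite IH, (H L) by (lia || (intros; apply H; lia)); ring.
Qed.

Lemma rsum_mono f L L' : (forall j, 0 <= f j) -> (L <= L')%nat -> rsum f L <= rsum f L'.
Proof.
  intros H HL. replace L' with (L + (L' - L))%nat by lia. rewrite rsum_app.
  pose proof (rsum_nonneg (fun j => f (L + j)%nat) (L' - L) (fun j _ => H _)). lra.
Qed.

Lemma rsum_support f L K : (forall j, (L <= j)%nat -> f j = 0) -> (L <= K)%nat ->
  rsum f K = rsum f L.
Proof.
  intros H HK. replace K with (L + (K - L))%nat by lia. rewrite rsum_app.
  rewrite (rsum_zero (fun j => f (L + j)%nat)) by (intros; apply H; lia). ring.
Qed.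

Lemma rsum_block f L m :
  rsum f (L * m) = rsum (fun k => rsum (fun j => f (L * k + j)%nat) L) m.
Proof.
  induction m as [|m IH]; simpl; [now rewrite Nat.mul_0_r|].
  now rewrite Nat.mul_succ_r, rsum_app, IH.
Qed.

Lemma rsum_swap (F : nat -> nat -> R) I K :
  rsum (fun i => rsum (F i) K) I = rsum (fun k => rsum (fun i => F i k) I) K.
Proof.
  induction I as [|I IH]; simpl; [symmetry; now apply rsum_zero|].
  now rewrite IH, <- rsum_plus.
Qed.

Lemma rsum_const c L : rsum (fun _ => c) L = INR L * c.
Proof. induction L as [|L IH]; cbn [rsum]; [simpl; ring|]. rewrite IH, S_INR; ring. Qed.

Lemma rsum_cauchy_schwarz f L : rsum f L ^ 2 <= INR L * rsum (fun j => f j ^ 2) L.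
Proof.
  assert (Hcross : forall M x,
    2 * rsum f M * x <= rsum (fun j => f j ^ 2) M + INR M * x ^ 2).
  { intros M x. induction M as [|M IH]; cbn [rsum]; [simpl; lra|].
    rewrite S_INR.
    assert (2 * f M * x <= f M ^ 2 + x ^ 2) by (pose proof (pow2_ge_0 (f M - x)); nra).
    nra. }
  induction L as [|L IH]; cbn [rsum]; [simpl; lra|].
  rewrite S_INR. pose proof (Hcross L (f L)). nra.
Qed.

Definition indicator (a b k : nat) : R := if (Nat.leb a k && Nat.ltb k b)%bool then 1 else 0.

Lemma indicator_cases a b k :
  ((a <= k < b)%nat /\ indicator a b k = 1) \/ (~ (a <= k < b)%nat /\ indicator a b k = 0).
Proof.
  unfold indicator. destruct (Nat.leb_spec a k), (Nat.ltb_spec k b); simpl;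
    [left | right..]; split; auto; lia.
Qed.

Lemma rsum_indicator a b K : (a <= b)%nat ->
  rsum (indicator a b) K = INR (Nat.min K b - Nat.min K a).
Proof.
  intros Hab. induction K as [|K IH]; cbn [rsum]; [reflexivity|]. rewrite IH.
  destruct (indicator_cases a b K) as [[HK ->]|[HK ->]].
  - replace (Nat.min (S K) b - Nat.min (S K) a)%nat
      with (S (Nat.min K b - Nat.min K a)) by lia. rewrite S_INR; ring.
  - replace (Nat.min (S K) b - Nat.min (S K) a)%nat
      with (Nat.min K b - Nat.min K a)%nat by lia. ring.
Qed.

Lemma rsum_geometric_tail N K :
  rsum (fun i => if Nat.leb N i then (/ 2) ^ i else 0) K <= 2 * (/ 2) ^ N.
Proof.
  assert (Hsum : rsum (fun i => if Nat.leb N i then (/ 2) ^ i else 0) K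
                 = 2 * (/ 2) ^ N - 2 * (/ 2) ^ Nat.max N K).
  { induction K as [|K IH]; cbn [rsum]; [rewrite Nat.max_0_r; ring|]. rewrite IH.
    destruct (Nat.leb_spec N K).
    - rewrite Nat.max_r, Nat.max_r by lia. change ((/ 2) ^ S K) with (/ 2 * (/ 2) ^ K). field.
    - rewrite Nat.max_l, Nat.max_l by lia. ring. }
  rewrite Hsum. pose proof (pow_lt (/ 2) (Nat.max N K) ltac:(lra)). lra.
Qed.

Definition csum (f : nat -> C) (L : nat) : C :=
  (rsum (fun j => fst (f j)) L, rsum (fun j => snd (f j)) L).

Lemma csum_ext (f g : nat -> C) L : (forall j, (j < L)%nat -> f j = g j) -> csum f L = csum g L.
Proof. intros H. unfold csum. f_equal; apply rsum_ext; intros j Hj; now rewrite H. Qed.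

Lemma csum_app (f : nat -> C) a b : csum f (a + b) = (csum f a + csum (fun j => f (a + j)%nat) b)%C.
Proof. unfold csum. now rewrite !rsum_app. Qed.

Lemma csum_support (f : nat -> C) L K : (forall j, (L <= j)%nat -> f j = 0%C) -> (L <= K)%nat ->
  csum f K = csum f L.
Proof.
  intros H HK. unfold csum. f_equal; apply rsum_support; auto; intros j Hj; now rewrite H.
Qed.

Lemma csum_zero (f : nat -> C) L : (forall j, (j < L)%nat -> f j = 0%C) -> csum f L = 0%C.
Proof. intros H. unfold csum, RtoC. f_equal; apply rsum_zero; intros j Hj; now rewrite H. Qed.

Lemma csum_single (f : nat -> C) L i : (i < L)%nat ->
  (forall j, (j < L)%nat -> j <> i -> f j = 0%C) ->
  csum f L = f i.
Proof.
  intros Hi H. unfold csum. rewrite !(rsum_single _ L i) by (auto; intros j Hj Hji; now rewrite H).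
  symmetry; apply surjective_pairing.
Qed.

Lemma csum_block (f : nat -> C) L m :
  csum f (L * m) = csum (fun k => csum (fun j => f (L * k + j)%nat) L) m.
Proof. unfold csum. now rewrite !rsum_block. Qed.

Lemma csum_plus (f g : nat -> C) L : csum (fun j => f j + g j)%C L = (csum f L + csum g L)%C.
Proof. unfold csum. simpl. now rewrite !rsum_plus. Qed.

Lemma csum_minus (f g : nat -> C) L : csum (fun j => f j - g j)%C L = (csum f L - csum g L)%C.
Proof. unfold csum, Cminus, Cplus, Copp. simpl. f_equal; now rewrite rsum_plus, rsum_opp. Qed.

Lemma csum_conj (f : nat -> C) L : csum (fun j => Cconj (f j)) L = Cconj (csum f L).
Proof. unfold csum, Cconj. simpl. now rewrite rsum_opp. Qed.

Lemma csum_RtoC u L : csum (fun j => RtoC (u j)) L = RtoC (rsum u L).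
Proof. unfold csum, RtoC. simpl. f_equal. now apply rsum_zero. Qed.

Lemma Cmod_csum_sq (f : nat -> C) L :
  Cmod (csum f L) ^ 2 <= INR L * rsum (fun j => Cmod (f j) ^ 2) L.
Proof.
  rewrite Cmod2_alt, (rsum_ext _ (fun j => fst (f j) ^ 2 + snd (f j) ^ 2))
    by (intros; apply Cmod2_alt).
  rewrite rsum_plus. unfold csum, Re, Im; cbn [fst snd].
  pose proof (rsum_cauchy_schwarz (fun j => fst (f j)) L).
  pose proof (rsum_cauchy_schwarz (fun j => snd (f j)) L). lra.
Qed.

Lemma sum_n_csum (a : nat -> C) N : sum_n a N = csum a (S N).
Proof.
  induction N as [|N IH].
  - rewrite sum_O. unfold csum; cbn [rsum]. rewrite !Rplus_0_l. apply surjective_pairing.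
  - rewrite sum_Sn, IH. reflexivity.
Qed.

Lemma is_series_csum (a : nat -> C) L : (forall m, (L <= m)%nat -> a m = 0%C) ->
  is_series a (csum a L).
Proof.
  intros H. apply (filterlim_ext_loc (fun _ => csum a L)); [|apply filterlim_const].
  exists L. intros N HN. rewrite sum_n_csum. symmetry. apply csum_support; auto.
Qed.

Lemma csum_const (w : C) L : csum (fun _ => w) L = (RtoC (INR L) * w)%C.
Proof. unfold csum, Cmult, RtoC. simpl. rewrite !rsum_const. f_equal; ring. Qed.

Lemma is_series_C_unique (a : nat -> C) l l' : is_series a l -> is_series a l' -> l = l'.
Proof.
  intros H H'.
  exact (@filterlim_locally_unique nat C_AbsRing C_NormedModule eventually _ (sum_n a) l l' H H').
Qed.

Lemma sum_n_rsum (a : nat -> R) N : sum_n a N = rsum a (S N).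
Proof.
  induction N as [|N IH]; [rewrite sum_O; simpl; ring|].
  rewrite sum_Sn, IH. reflexivity.
Qed.

Section NonnegSeries.
Variable a : nat -> R.
Hypothesis a_ge0 : forall k, 0 <= a k.

Lemma sum_n_incr N : sum_n a N <= sum_n a (S N).
Proof. rewrite !sum_n_rsum. cbn [rsum]. pose proof (a_ge0 (S N)). lra. Qed.

Lemma ex_series_rsum_bounded B : (forall K, rsum a K <= B) -> ex_series a /\ Series a <= B.
Proof.
  intros HB. destruct (ex_finite_lim_seq_incr (sum_n a) B sum_n_incr) as [l Hl].
  { intros N. rewrite sum_n_rsum. apply HB. }
  split; [now exists l|]. rewrite (is_series_unique a l Hl).
  apply (is_lim_seq_le (sum_n a) (fun _ => B) l B); [|exact Hl|apply is_lim_seq_const].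
  intros N. rewrite sum_n_rsum. apply HB.
Qed.

Lemma rsum_le_Series K : ex_series a -> rsum a K <= Series a.
Proof.
  intros Ha. apply Rle_trans with (rsum a (S K)); [apply rsum_mono; auto|].
  rewrite <- sum_n_rsum.
  exact (is_lim_seq_incr_compare (sum_n a) (Series a) (Series_correct a Ha) sum_n_incr K).
Qed.

Lemma Series_tail_small eps : ex_series a -> 0 < eps ->
  exists M, forall K, rsum (fun j => a (M + j)%nat) K <= eps.
Proof.
  intros Ha He.
  assert (Hlim : is_lim_seq (sum_n a) (Series a)) by exact (Series_correct a Ha).
  destruct (proj2 (is_lim_seq_spec _ _) Hlim (mkposreal eps He)) as [N HN].
  exists (S N). intros K. specialize (HN N (le_n _)). simpl in HN.
  rewrite sum_n_rsum in HN. apply Rabs_lt_between in HN.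
  pose proof (rsum_le_Series (S N + K) Ha). rewrite rsum_app in H. lra.
Qed.

End NonnegSeries.

Definition partial_sqnorm (x : nat -> C) (K : nat) : R := rsum (fun k => Cmod (x k) ^ 2) K.

Lemma inH2_partial_sqnorm_bounded (x : nat -> C) B : (forall K, partial_sqnorm x K <= B) ->
  inH2 x /\ H2norm x <= sqrt B.
Proof.
  intros HB. destruct (ex_series_rsum_bounded (fun k => Cmod (x k) ^ 2) (fun _ => pow2_ge_0 _) B HB)
    as [Hex Hle].
  split; [exact Hex|]. apply sqrt_le_1_alt, Hle.
Qed.

Lemma partial_sqnorm_le_H2norm (x : nat -> C) K : inH2 x -> partial_sqnorm x K <= H2norm x ^ 2.
Proof.
  intros Hx. unfold H2norm. rewrite pow2_sqrt.
  - exact (rsum_le_Series _ (fun _ => pow2_ge_0 _) K Hx).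
  - exact (rsum_le_Series _ (fun _ => pow2_ge_0 _) 0 Hx).
Qed.

Lemma Cmod_add_sq_le (a b : C) : Cmod (a + b) ^ 2 <= 2 * Cmod a ^ 2 + 2 * Cmod b ^ 2.
Proof.
  rewrite !Cmod2_alt. unfold Re, Im; destruct a as [a1 a2], b as [b1 b2]; simpl.
  pose proof (pow2_ge_0 (a1 - b1)). pose proof (pow2_ge_0 (a2 - b2)). nra.
Qed.

Lemma partial_sqnorm_add_le (x y : nat -> C) K :
  partial_sqnorm (fun k => x k + y k)%C K <= 2 * partial_sqnorm x K + 2 * partial_sqnorm y K.
Proof.
  unfold partial_sqnorm. rewrite <- !rsum_scal, <- rsum_plus.
  apply rsum_le. intros; apply Cmod_add_sq_le.
Qed.

Lemma partial_sqnorm_RtoC (u : nat -> R) K :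
  partial_sqnorm (fun k => RtoC (u k)) K = rsum (fun k => u k ^ 2) K.
Proof. apply rsum_ext. intros. now rewrite Cmod_R, pow2_abs. Qed.

Lemma partial_sqnorm_support (x : nat -> C) L K :
  (forall k, (L <= k)%nat -> x k = 0%C) -> partial_sqnorm x K <= partial_sqnorm x L.
Proof.
  intros H. destruct (Nat.le_gt_cases K L).
  - apply rsum_mono; auto. intros; apply pow2_ge_0.
  - unfold partial_sqnorm. rewrite (rsum_support _ L K); [lra| |lia].
    intros k Hk. rewrite H by lia. rewrite Cmod_0. ring.
Qed.

Lemma Cmod_le_H2norm (x : nat -> C) k : inH2 x -> Cmod (x k) <= H2norm x.
Proof.
  intros Hx. pose proof (partial_sqnorm_le_H2norm x (S k) Hx) as H.
  unfold partial_sqnorm in H. cbn [rsum] in H.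
  pose proof (rsum_nonneg (fun k => Cmod (x k) ^ 2) k (fun _ _ => pow2_ge_0 _)).
  pose proof (Cmod_ge_0 (x k)). pose proof (sqrt_pos (Series (fun k => Cmod (x k) ^ 2))).
  unfold H2norm in *. nra.
Qed.

Lemma sqrt_lt_of_lt_sq x eps : 0 < eps -> x < eps ^ 2 -> sqrt x < eps.
Proof.
  intros He Hx. destruct (Rle_lt_dec x 0) as [H|H].
  - rewrite sqrt_neg_0 by exact H. exact He.
  - rewrite <- (sqrt_pow2 eps) by lra. apply sqrt_lt_1_alt. lra.
Qed.

(** * W_n^* acts by block sums *)

Definition blocksum (L : nat) (x : nat -> C) (k : nat) : C := csum (fun j => x (L * k + j)%nat) L.

Lemma blocksum_blocksum a b (x : nat -> C) : blocksum a (blocksum b x) = blocksum (b * a) x.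
Proof.
  apply functional_extensionality. intros k. unfold blocksum. rewrite csum_block.
  apply csum_ext. intros i _. apply csum_ext. intros j _. f_equal. ring.
Qed.

Lemma blocksum_add L (x y : nat -> C) k :
  blocksum L (fun l => x l + y l)%C k = (blocksum L x k + blocksum L y k)%C.
Proof. apply csum_plus. Qed.

Lemma blocksum_sub L (x y : nat -> C) k :
  blocksum L (H2sub x y) k = H2sub (blocksum L x) (blocksum L y) k.
Proof. apply csum_minus. Qed.

Lemma partial_sqnorm_blocksum L (x : nat -> C) K :
  partial_sqnorm (blocksum L x) K <= INR L * partial_sqnorm x (L * K).
Proof.
  unfold partial_sqnorm. rewrite rsum_block, <- rsum_scal.
  apply rsum_le. intros; apply Cmod_csum_sq.
Qed.

Lemma blocksum_inH2 L (x : nat -> C) : inH2 x -> inH2 (blocksum L x).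
Proof.
  intros Hx. apply (inH2_partial_sqnorm_bounded _ (INR L * H2norm x ^ 2)). intros K.
  eapply Rle_trans; [apply partial_sqnorm_blocksum|].
  apply Rmult_le_compat_l; [apply pos_INR | now apply partial_sqnorm_le_H2norm].
Qed.

Lemma blocksum_vanish L0 L (x : nat -> C) :
  (forall k, (L0 <= k)%nat -> x k = 0%C) -> csum x L0 = 0%C ->
  (L0 <= L)%nat -> forall k, blocksum L x k = 0%C.
Proof.
  intros Hx Hsum HL [|k]; unfold blocksum.
  - rewrite (csum_ext _ x) by (intros; now rewrite Nat.mul_0_r).
    rewrite (csum_support x L0 L); assumption.
  - apply csum_zero. intros j _. apply Hx. nia.
Qed.

Definition unit_vector (k m : nat) : C := if Nat.eqb m k then 1%C else 0%C.

Lemma inH2_unit_vector k : inH2 (unit_vector k).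
Proof.
  apply (inH2_partial_sqnorm_bounded _ (partial_sqnorm (unit_vector k) (S k))). intros K.
  apply partial_sqnorm_support. intros m Hm. unfold unit_vector.
  destruct (Nat.eqb_spec m k); [lia | reflexivity].
Qed.

Section Adjoint.
Variables (n : nat) (T : (nat -> C) -> nat -> C).
Hypothesis n_pos : (0 < n)%nat.
Hypothesis T_adjoint : is_adjoint_Wn n T.

(* Testing the adjoint identity against the unit vector e_k isolates the k-th coefficient. *)
Lemma adjoint_Wn_eq_blocksum (g : nat -> C) : inH2 g -> T g = blocksum n g.
Proof.
  intros Hg. apply functional_extensionality. intros k.
  destruct (proj2 T_adjoint (unit_vector k) g (inH2_unit_vector k) Hg) as [l [HW HT]].
  assert (Hl : l = Cconj (blocksum n g k)).
  { apply (is_series_C_unique _ _ _ HW).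
    replace (Cconj (blocksum n g k))
      with (csum (fun m => Wn n (unit_vector k) m * Cconj (g m))%C (n * k + n)).
    - apply is_series_csum. intros m Hm. unfold Wn, unit_vector.
      destruct (Nat.eqb_spec (m / n) k) as [E|E]; [|apply Cmult_0_l].
      assert (S k <= m / n)%nat by (apply Nat.div_le_lower_bound; lia). lia.
    - unfold blocksum. rewrite csum_app, csum_zero, <- csum_conj, Cplus_0_l.
      + apply csum_ext. intros j Hj. unfold Wn, unit_vector.
        replace ((n * k + j) / n)%nat with k by (apply Nat.div_unique with j; lia).
        rewrite Nat.eqb_refl. apply Cmult_1_l.
      + intros m Hm. unfold Wn, unit_vector.
        destruct (Nat.eqb_spec (m / n) k) as [E|E]; [|apply Cmult_0_l].
        assert (m / n < k)%nat by (apply Nat.Div0.div_lt_upper_bound; lia). lia. }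
  assert (Hl' : l = Cconj (T g k)).
  { apply (is_series_C_unique _ _ _ HT).
    replace (Cconj (T g k)) with (csum (fun m => unit_vector k m * Cconj (T g m))%C (S k)).
    - apply is_series_csum. intros m Hm. unfold unit_vector.
      destruct (Nat.eqb_spec m k); [lia | apply Cmult_0_l].
    - rewrite (csum_single _ _ k); [|lia|].
      + unfold unit_vector. rewrite Nat.eqb_refl. apply Cmult_1_l.
      + intros j _ Hj. unfold unit_vector. destruct (Nat.eqb_spec j k); [lia | apply Cmult_0_l]. }
  rewrite <- (Cconj_conj (T g k)), <- Hl', Hl. apply Cconj_conj.
Qed.

Lemma adjoint_Wn_iter (g : nat -> C) m : inH2 g -> Nat.iter m T g = blocksum (n ^ m) g.
Proof.
  intros Hg. assert (Hiter : forall k, inH2 (Nat.iter k T g)).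
  { intros k. induction k as [|k IH]; [exact Hg | exact (proj1 T_adjoint _ IH)]. }
  induction m as [|m IH].
  - apply functional_extensionality. intros k. rewrite Nat.pow_0_r.
    unfold blocksum, csum. cbn [rsum]. rewrite !Rplus_0_l, Nat.mul_1_l, Nat.add_0_r.
    apply surjective_pairing.
  - simpl Nat.iter. rewrite adjoint_Wn_eq_blocksum, IH, blocksum_blocksum by apply Hiter.
    now rewrite Nat.pow_succ_r', Nat.mul_comm.
Qed.

Lemma adjoint_Wn_iter_sub (x y : nat -> C) m : inH2 x -> inH2 y ->
  H2sub (Nat.iter m T x) (Nat.iter m T y) = blocksum (n ^ m) (H2sub x y).
Proof.
  intros Hx Hy. rewrite !adjoint_Wn_iter by assumption.
  apply functional_extensionality. intros k. symmetry. apply blocksum_sub.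
Qed.

End Adjoint.

(** * Bumps *)

Definition step_pair (w s k : nat) : R := indicator s (s + w) k - indicator (s + w) (s + 2 * w) k.

Lemma step_pair_support w s k : step_pair w s k <> 0 -> (s <= k < s + 2 * w)%nat.
Proof.
  unfold step_pair. intros H.
  destruct (indicator_cases s (s + w) k) as [[? ?]|[? E1]]; [lia|].
  destruct (indicator_cases (s + w) (s + 2 * w) k) as [[? ?]|[? E2]]; [lia|].
  rewrite E1, E2 in H. lra.
Qed.

Lemma step_pair_plateau w s j : (j < w)%nat -> step_pair w s (s + j) = 1.
Proof.
  intros Hj. unfold step_pair.
  destruct (indicator_cases s (s + w) (s + j)) as [[? ->]|[? _]]; [|lia].
  destruct (indicator_cases (s + w) (s + 2 * w) (s + j)) as [[? _]|[? ->]]; [lia | ring].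
Qed.

Lemma rsum_step_pair w s L : (s + 2 * w <= L)%nat -> rsum (step_pair w s) L = 0.
Proof.
  intros HL. unfold step_pair. rewrite rsum_minus, !rsum_indicator by lia.
  replace (Nat.min L (s + w) - Nat.min L s)%nat with w by lia.
  replace (Nat.min L (s + 2 * w) - Nat.min L (s + w))%nat with w by lia. ring.
Qed.

Lemma rsum_step_pair_sq w s K : rsum (fun k => step_pair w s k ^ 2) K <= 2 * INR w.
Proof.
  rewrite (rsum_ext _ (fun k => indicator s (s + w) k + indicator (s + w) (s + 2 * w) k)).
  - rewrite rsum_plus, !rsum_indicator by lia.
    assert (INR (Nat.min K (s + w) - Nat.min K s) <= INR w) by (apply le_INR; lia).
    assert (INR (Nat.min K (s + 2 * w) - Nat.min K (s + w)) <= INR w) by (apply le_INR; lia).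
    lra.
  - intros k _. unfold step_pair.
    destruct (indicator_cases s (s + w) k) as [[? ->]|[? ->]];
      destruct (indicator_cases (s + w) (s + 2 * w) k) as [[? ->]|[? ->]]; try lia; ring.
Qed.

Definition bump_exp (i : nat) : nat := 4 * i * (i + 1).

Definition bump (n i k : nat) : R :=
  INR n ^ i / INR (n ^ bump_exp i) * step_pair (n ^ bump_exp i) (n ^ bump_exp i * n) k.

(* Only the bumps i <= k can be nonzero at k, since bump i vanishes below n^(p i) * n > i. *)
Definition bumps (n : nat) (g : nat -> R) (k : nat) : R := rsum (fun i => g i * bump n i k) (S k).

Section Bumps.
Variable n : nat.
Hypothesis n_ge2 : (2 <= n)%nat.

Lemma bump_support i k : bump n i k <> 0 ->
  (n ^ bump_exp i * n <= k < n ^ bump_exp i * n + 2 * n ^ bump_exp i)%nat.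
Proof.
  intros H. apply step_pair_support. intros E. apply H. unfold bump. rewrite E. ring.
Qed.

Lemma bump_lt i k : bump n i k <> 0 -> (k < n ^ (bump_exp i + 2))%nat.
Proof.
  intros H%bump_support. rewrite Nat.pow_add_r. simpl. nia.
Qed.

Lemma bump_index_le i k : bump n i k <> 0 -> (i <= k)%nat.
Proof.
  intros H%bump_support. pose proof (Nat.pow_gt_lin_r n (bump_exp i) ltac:(lia)).
  unfold bump_exp in *. nia.
Qed.

Lemma bump_disjoint i j k : bump n i k <> 0 -> bump n j k <> 0 -> i = j.
Proof.
  assert (Hlt : forall i j k, (i < j)%nat -> bump n i k <> 0 -> bump n j k = 0).
  { intros i' j' k' Hij Hi. apply NNPP. intros Hj%bump_support. apply bump_lt in Hi.
    assert (n ^ (bump_exp i' + 2) <= n ^ (bump_exp j' + 1))%nat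
      by (apply Nat.pow_le_mono_r; unfold bump_exp; nia).
    rewrite (Nat.pow_add_r n (bump_exp j')), Nat.pow_1_r in H. lia. }
  intros Hi Hj. destruct (Nat.lt_total i j) as [H|[H|H]]; auto.
  - contradict Hj. now apply (Hlt i).
  - contradict Hi. now apply (Hlt j).
Qed.

Lemma bump_plateau i j : (j < n ^ bump_exp i)%nat ->
  bump n i (n ^ bump_exp i * n + j) = INR n ^ i / INR (n ^ bump_exp i).
Proof. intros Hj. unfold bump. rewrite step_pair_plateau by exact Hj. ring. Qed.

Lemma rsum_bump i L : (n ^ (bump_exp i + 2) <= L)%nat -> rsum (bump n i) L = 0.
Proof.
  intros HL. unfold bump. rewrite rsum_scal, rsum_step_pair; [ring|].
  rewrite Nat.pow_add_r in HL. simpl in HL. nia.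
Qed.

Lemma rsum_bump_sq i K :
  rsum (fun k => bump n i k ^ 2) K <= 2 * INR n ^ (2 * i) / INR n ^ bump_exp i.
Proof.
  assert (Hw : 0 < INR n ^ bump_exp i) by (apply pow_lt, lt_0_INR; lia).
  unfold bump. rewrite (rsum_ext _ (fun k => (INR n ^ i / INR (n ^ bump_exp i)) ^ 2
                                        * step_pair (n ^ bump_exp i) (n ^ bump_exp i * n) k ^ 2))
    by (intros; ring).
  rewrite rsum_scal, pow_INR.
  pose proof (rsum_step_pair_sq (n ^ bump_exp i) (n ^ bump_exp i * n) K) as H.
  rewrite pow_INR in H.
  apply Rle_trans with ((INR n ^ i / INR n ^ bump_exp i) ^ 2 * (2 * INR n ^ bump_exp i)).
  - apply Rmult_le_compat_l; [apply pow2_ge_0 | exact H].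
  - rewrite Nat.mul_comm, pow_mult. right. field. lra.
Qed.

Lemma bump_weight_le m i : (m + 3 * i <= bump_exp i)%nat ->
  INR n ^ m * (2 * INR n ^ (2 * i) / INR n ^ bump_exp i) <= 2 * (/ 2) ^ i.
Proof.
  intros Hi.
  assert (Hn : 2 <= INR n) by (replace 2 with (INR 2) by (simpl; ring); now apply le_INR).
  replace (bump_exp i) with (m + 2 * i + i + (bump_exp i - m - 3 * i))%nat by lia.
  rewrite !pow_add, pow_inv.
  assert (0 < INR n ^ m) by (apply pow_lt; lra).
  assert (0 < INR n ^ (2 * i)) by (apply pow_lt; lra).
  assert (2 ^ i <= INR n ^ i) by (apply pow_incr; lra).
  assert (1 <= INR n ^ (bump_exp i - m - 3 * i)) by (apply pow_R1_Rle; lra).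
  assert (0 < 2 ^ i) by (apply pow_lt; lra).
  replace (INR n ^ m * (2 * INR n ^ (2 * i) /
             (INR n ^ m * INR n ^ (2 * i) * INR n ^ i * INR n ^ (bump_exp i - m - 3 * i))))
    with (2 / (INR n ^ i * INR n ^ (bump_exp i - m - 3 * i))) by (field; nra).
  unfold Rdiv. apply Rmult_le_compat_l; [lra|]. apply Rinv_le_contravar; nra.
Qed.

Lemma bumps_at g i k : bump n i k <> 0 -> bumps n g k = g i * bump n i k.
Proof.
  intros Hi. unfold bumps. apply (rsum_single (fun i => g i * bump n i k)).
  - pose proof (bump_index_le i k Hi). lia.
  - intros j _ Hji. destruct (Req_dec (bump n j k) 0) as [->|Hj]; [ring|].
    contradict Hji. exact (bump_disjoint j i k Hj Hi).
Qed.

Lemma bumps_extend g k K : (k < K)%nat -> bumps n g k = rsum (fun i => g i * bump n i k) K.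
Proof.
  intros HK. unfold bumps. symmetry. apply rsum_support; [|lia].
  intros i Hi. destruct (Req_dec (bump n i k) 0) as [->|H]; [ring|].
  apply bump_index_le in H. lia.
Qed.

Lemma bumps_sq g k : bumps n g k ^ 2 = rsum (fun i => (g i * bump n i k) ^ 2) (S k).
Proof.
  destruct (classic (exists i, bump n i k <> 0)) as [[i Hi]|Hnone].
  - rewrite (bumps_at g i k Hi), (rsum_single _ _ i); [reflexivity| |].
    + pose proof (bump_index_le i k Hi). lia.
    + intros j _ Hji. destruct (Req_dec (bump n j k) 0) as [->|Hj]; [ring|].
      contradict Hji. exact (bump_disjoint j i k Hj Hi).
  - assert (H0 : forall i, bump n i k = 0) by (intros i; apply NNPP; eauto).
    unfold bumps. rewrite !rsum_zero; [ring| |]; intros i _; rewrite H0; ring.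
Qed.

Lemma bumps_plus g g' k : bumps n (fun i => g i + g' i) k = bumps n g k + bumps n g' k.
Proof. unfold bumps. rewrite <- rsum_plus. apply rsum_ext. intros; ring. Qed.

Lemma bumps_minus g g' k : bumps n (fun i => g i - g' i) k = bumps n g k - bumps n g' k.
Proof. unfold bumps. rewrite <- rsum_minus. apply rsum_ext. intros; ring. Qed.

Lemma bumps_energy g c N m K : (forall i, Rabs (g i) <= c) -> (forall i, (i < N)%nat -> g i = 0) ->
  (forall i, (N <= i)%nat -> (m + 3 * i <= bump_exp i)%nat) ->
  INR n ^ m * rsum (fun k => bumps n g k ^ 2) K <= 4 * c ^ 2 * (/ 2) ^ N.
Proof.
  intros Hc Hg0 Hexp.
  assert (Hswap : rsum (fun k => bumps n g k ^ 2) K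
                  <= rsum (fun i => g i ^ 2 * rsum (fun k => bump n i k ^ 2) K) K).
  { rewrite (rsum_ext (fun i => g i ^ 2 * _) (fun i => rsum (fun k => (g i * bump n i k) ^ 2) K))
      by (intros; rewrite <- rsum_scal; apply rsum_ext; intros; ring).
    rewrite rsum_swap. apply rsum_le. intros k Hk. rewrite bumps_sq.
    apply rsum_mono; [intros; apply pow2_ge_0 | lia]. }
  assert (Hterm : forall i, INR n ^ m * (g i ^ 2 * rsum (fun k => bump n i k ^ 2) K)
                  <= 2 * c ^ 2 * (if Nat.leb N i then (/ 2) ^ i else 0)).
  { intros i. destruct (Nat.leb_spec N i).
    - assert (g i ^ 2 <= c ^ 2) by (rewrite <- pow2_abs; apply pow_incr; split;
        [apply Rabs_pos | apply Hc]).
      pose proof (bump_weight_le m i (Hexp i H)).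
      apply Rle_trans with (INR n ^ m * (c ^ 2 * (2 * INR n ^ (2 * i) / INR n ^ bump_exp i))).
      + apply Rmult_le_compat_l; [apply pow_le, pos_INR|].
        apply Rmult_le_compat; [apply pow2_ge_0 | apply rsum_nonneg; intros; apply pow2_ge_0 |
                                assumption | apply rsum_bump_sq].
      + pose proof (pow2_ge_0 c). nra.
    - rewrite Hg0 by lia. lra. }
  apply Rle_trans with (INR n ^ m * rsum (fun i => g i ^ 2 * rsum (fun k => bump n i k ^ 2) K) K).
  - apply Rmult_le_compat_l; [apply pow_le, pos_INR | exact Hswap].
  - rewrite <- rsum_scal. eapply Rle_trans; [apply rsum_le; intros i _; apply Hterm|].
    rewrite rsum_scal. pose proof (rsum_geometric_tail N K). pose proof (pow2_ge_0 c). nra.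
Qed.

Lemma bumps_finite g L : (forall i, g i <> 0 -> (n ^ (bump_exp i + 2) <= L)%nat) ->
  (forall k, (L <= k)%nat -> bumps n g k = 0) /\ rsum (bumps n g) L = 0.
Proof.
  intros Hg. split.
  - intros k Hk. unfold bumps. apply rsum_zero. intros i _.
    destruct (Req_dec (g i) 0) as [->|Hgi]; [ring|].
    destruct (Req_dec (bump n i k) 0) as [->|Hb]; [ring|].
    apply bump_lt in Hb. specialize (Hg i Hgi). lia.
  - rewrite (rsum_ext _ (fun k => rsum (fun i => g i * bump n i k) L))
      by (intros; now apply bumps_extend).
    rewrite <- rsum_swap. apply rsum_zero. intros i _. rewrite rsum_scal.
    destruct (Req_dec (g i) 0) as [->|Hgi]; [ring|]. rewrite rsum_bump by auto. ring.
Qed.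

End Bumps.

(** * Finitely supported sequences with zero sum *)

Definition finite_zero_sum (e : nat -> C) : Prop :=
  exists L, (forall k, (L <= k)%nat -> e k = 0%C) /\ csum e L = 0%C.

Lemma finite_zero_sum_sub (e e' : nat -> C) :
  finite_zero_sum e -> finite_zero_sum e' -> finite_zero_sum (H2sub e e').
Proof.
  intros [L [He Hs]] [L' [He' Hs']]. exists (Nat.max L L'). split.
  - intros k Hk. unfold H2sub. rewrite He, He' by lia. ring.
  - unfold H2sub.
    rewrite csum_minus, (csum_support e L), (csum_support e' L'), Hs, Hs' by (auto; lia).
    ring.
Qed.

Lemma finite_zero_sum_bounded d : finite_zero_sum d -> exists B, forall k, Cmod (d k) <= B.
Proof.
  intros [L [Hd _]]. exists (rsum (fun j => Cmod (d j)) L). intros k.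
  destruct (Nat.lt_ge_cases k L) as [Hk|Hk].
  - replace L with (S k + (L - S k))%nat by lia. rewrite rsum_app. cbn [rsum].
    pose proof (rsum_nonneg (fun j => Cmod (d j)) k (fun _ _ => Cmod_ge_0 _)).
    pose proof (rsum_nonneg (fun j => Cmod (d (S k + j)%nat)) (L - S k) (fun _ _ => Cmod_ge_0 _)).
    lra.
  - rewrite Hd, Cmod_0 by exact Hk. apply rsum_nonneg. intros; apply Cmod_ge_0.
Qed.

Definition zero_sum_truncation (f : nat -> C) (M L k : nat) : C :=
  if Nat.ltb k M then f k
  else if Nat.ltb k (M + S L) then (RtoC (- / INR (S L)) * csum f M)%C else 0%C.

Lemma zero_sum_truncation_finite_zero_sum f M L :
  finite_zero_sum (zero_sum_truncation f M L).
Proof.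
  exists (M + S L)%nat. split.
  - intros k Hk. unfold zero_sum_truncation.
    destruct (Nat.ltb_spec k M), (Nat.ltb_spec k (M + S L)); auto; lia.
  - rewrite csum_app, (csum_ext (zero_sum_truncation f M L) f M).
    + rewrite (csum_ext _ (fun _ => RtoC (- / INR (S L)) * csum f M)%C (S L)).
      * rewrite csum_const, Cmult_assoc, <- RtoC_mult.
        replace (INR (S L) * - / INR (S L)) with (Ropp 1) by (field; apply not_0_INR; lia).
        rewrite RtoC_opp. ring.
      * intros j Hj. unfold zero_sum_truncation.
        destruct (Nat.ltb_spec (M + j) M), (Nat.ltb_spec (M + j) (M + S L)); auto; lia.
    + intros j Hj. unfold zero_sum_truncation. now destruct (Nat.ltb_spec j M); [|lia].
Qed.

Lemma partial_sqnorm_sub_truncation f M L K :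
  partial_sqnorm (H2sub f (zero_sum_truncation f M L)) K
  <= 2 * rsum (fun j => Cmod (f (M + j)%nat) ^ 2) K + 2 * (Cmod (csum f M) ^ 2 / INR (S L)).
Proof.
  set (w := (RtoC (- / INR (S L)) * csum f M)%C).
  assert (HSL : 0 < INR (S L)) by (apply lt_0_INR; lia).
  assert (Hw : Cmod w ^ 2 = Cmod (csum f M) ^ 2 / INR (S L) ^ 2).
  { unfold w.
    rewrite Cmod_mult, Cmod_R, Rabs_Ropp, Rabs_pos_eq by (left; now apply Rinv_0_lt_compat).
    field. lra. }
  apply Rle_trans with (rsum (fun k => 2 * (if Nat.ltb k M then 0 else Cmod (f k) ^ 2)
                                       + 2 * Cmod w ^ 2 * indicator M (M + S L) k) K).
  - apply rsum_le. intros k _. unfold H2sub, zero_sum_truncation. fold w.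
    pose proof (pow2_ge_0 (Cmod w)). pose proof (pow2_ge_0 (Cmod (f k))).
    destruct (Nat.ltb_spec k M).
    + assert (E : Cminus (f k) (f k) = 0%C) by ring. rewrite E, Cmod_0.
      destruct (indicator_cases M (M + S L) k) as [[_ ->]|[_ ->]]; simpl; lra.
    + destruct (indicator_cases M (M + S L) k) as [[Hk ->]|[Hk ->]];
        destruct (Nat.ltb_spec k (M + S L)); try lia.
      * unfold Cminus. eapply Rle_trans; [apply Cmod_add_sq_le|]. rewrite Cmod_opp. lra.
      * replace (f k - 0)%C with (f k) by ring. lra.
  - rewrite rsum_plus, !rsum_scal, rsum_indicator by lia.
    assert (Htail : rsum (fun k => if Nat.ltb k M then 0 else Cmod (f k) ^ 2) K
                    <= rsum (fun j => Cmod (f (M + j)%nat) ^ 2) K).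
    { apply Rle_trans with (rsum (fun k => if Nat.ltb k M then 0 else Cmod (f k) ^ 2) (M + K)).
      - apply rsum_mono; [|lia]. intros k. destruct (Nat.ltb k M); [lra | apply pow2_ge_0].
      - rewrite rsum_app, rsum_zero.
        + apply Req_le. rewrite Rplus_0_l. apply rsum_ext. intros j _.
          destruct (Nat.ltb_spec (M + j) M); [lia | reflexivity].
        + intros k Hk. destruct (Nat.ltb_spec k M); [reflexivity | lia]. }
    assert (INR (Nat.min K (M + S L) - Nat.min K M) <= INR (S L)) by (apply le_INR; lia).
    rewrite Hw. assert (0 <= Cmod (csum f M) ^ 2 / INR (S L) ^ 2)
      by (apply Rmult_le_pos; [apply pow2_ge_0 | left; apply Rinv_0_lt_compat, pow_lt; lra]).
    replace (Cmod (csum f M) ^ 2 / INR (S L)) with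
      (INR (S L) * (Cmod (csum f M) ^ 2 / INR (S L) ^ 2)) by (field; lra).
    nra.
Qed.

Lemma finite_zero_sum_dense f delta : inH2 f -> 0 < delta ->
  exists d, finite_zero_sum d /\ forall K, partial_sqnorm (H2sub f d) K <= delta.
Proof.
  intros Hf Hd.
  destruct (Series_tail_small _ (fun _ => pow2_ge_0 _) (delta / 4) Hf ltac:(lra)) as [M HM].
  destruct (INR_archimed (delta / 4) (Cmod (csum f M) ^ 2) ltac:(lra)) as [L HL].
  exists (zero_sum_truncation f M L). split; [apply zero_sum_truncation_finite_zero_sum|].
  intros K. eapply Rle_trans; [apply partial_sqnorm_sub_truncation|].
  assert (Cmod (csum f M) ^ 2 / INR (S L) <= delta / 4).
  { rewrite S_INR. pose proof (pos_INR L).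
    apply Rmult_le_reg_r with (INR L + 1); [lra|]. unfold Rdiv. rewrite Rmult_assoc, Rinv_l by lra.
    lra. }
  specialize (HM K). lra.
Qed.

(** * Block sums of a perturbation by bumps *)

Section Perturbation.
Variable n : nat.
Hypothesis n_ge2 : (2 <= n)%nat.
Variables (e : nat -> C) (g : nat -> R) (c : R).
Hypothesis e_finite_zero_sum : finite_zero_sum e.
Hypothesis g_bounded : forall i, Rabs (g i) <= c.

Let z (k : nat) : C := (e k + RtoC (bumps n g k))%C.

Lemma bound_nonneg : 0 <= c.
Proof. pose proof (g_bounded O). pose proof (Rabs_pos (g O)). lra. Qed.

Lemma perturbation_inH2 : inH2 z.
Proof.
  destruct e_finite_zero_sum as [L0 [He0 _]].
  apply (inH2_partial_sqnorm_bounded z (2 * partial_sqnorm e L0 + 2 * (4 * c ^ 2))). intros K.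
  eapply Rle_trans; [apply partial_sqnorm_add_le|].
  pose proof (partial_sqnorm_support e L0 K He0).
  pose proof (bumps_energy n n_ge2 g c 0 0 K g_bounded ltac:(lia)
    ltac:(intros; unfold bump_exp; nia)).
  rewrite partial_sqnorm_RtoC. simpl in *. lra.
Qed.

(* At m = p(i0) + 2 the sequence e and the bumps i <= i0 fit in the first block and cancel. *)
Lemma blocksum_perturbation_tail L0 i0 K : (forall k, (L0 <= k)%nat -> e k = 0%C) ->
  csum e L0 = 0%C -> (L0 <= i0)%nat ->
  partial_sqnorm (blocksum (n ^ (bump_exp i0 + 2)) z) K <= 4 * c ^ 2 * (/ 2) ^ S i0.
Proof.
  intros He0 Hes Hi0. set (m := (bump_exp i0 + 2)%nat).
  set (head := fun i => if Nat.leb i i0 then g i else 0).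
  set (tail := fun i => if Nat.leb i i0 then 0 else g i).
  destruct (bumps_finite n n_ge2 head (n ^ m)) as [Hhead0 Hheads].
  { intros i Hi. unfold head in Hi. destruct (Nat.leb_spec i i0) as [Hii0|]; [|lra].
    apply Nat.pow_le_mono_r; [lia|]. unfold m, bump_exp. nia. }
  assert (Hhead : forall k, blocksum (n ^ m) (fun l => e l + RtoC (bumps n head l))%C k = 0%C).
  { assert (HL0 : (L0 <= n ^ m)%nat).
    { pose proof (Nat.pow_gt_lin_r n m ltac:(lia)). unfold m, bump_exp in *. nia. }
    apply (blocksum_vanish (n ^ m)); [| |lia].
    - intros k Hk. rewrite He0, Hhead0 by lia. apply Cplus_0_l.
    - rewrite csum_plus, csum_RtoC, Hheads, (csum_support e L0), Hes by auto. apply Cplus_0_l. }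
  assert (Hz : forall k,
    blocksum (n ^ m) z k = blocksum (n ^ m) (fun l => RtoC (bumps n tail l)) k).
  { intros k.
    rewrite <- (Cplus_0_l (blocksum _ (fun l => RtoC _) k)), <- (Hhead k), <- blocksum_add.
    unfold blocksum. apply csum_ext. intros j _. unfold z.
    rewrite <- Cplus_assoc, <- RtoC_plus, <- bumps_plus. do 3 f_equal.
    apply functional_extensionality. intros i. unfold head, tail. destruct (Nat.leb i i0); ring. }
  unfold partial_sqnorm. rewrite (rsum_ext _ (fun k => Cmod (blocksum (n ^ m)
    (fun l => RtoC (bumps n tail l)) k) ^ 2)) by (intros; now rewrite Hz).
  eapply Rle_trans; [apply partial_sqnorm_blocksum|]. rewrite partial_sqnorm_RtoC, pow_INR.
  apply bumps_energy; auto.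
  - intros i. unfold tail.
    destruct (Nat.leb i i0); [rewrite Rabs_R0; apply bound_nonneg | apply g_bounded].
  - intros i Hi. unfold tail. destruct (Nat.leb_spec i i0); [reflexivity | lia].
  - intros i Hi. unfold m, bump_exp. nia.
Qed.

Lemma blocksum_perturbation_small eps N0 : 0 < eps ->
  exists m, (N0 <= m)%nat /\ H2norm (blocksum (n ^ m) z) < eps.
Proof.
  intros He. destruct e_finite_zero_sum as [L0 [He0 Hes]].
  pose proof bound_nonneg as Hc.
  destruct (pow_lt_1_zero (/ 2) ltac:(rewrite Rabs_pos_eq; lra) (eps ^ 2 / (4 * c ^ 2 + 1)))
    as [I HI]; [apply Rdiv_lt_0_compat; [apply pow_lt | pose proof (pow2_ge_0 c)]; lra|].
  set (i0 := (N0 + L0 + I)%nat). exists (bump_exp i0 + 2)%nat.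
  split; [unfold bump_exp; nia|].
  destruct (inH2_partial_sqnorm_bounded _ _ (fun K => blocksum_perturbation_tail L0 i0 K He0 Hes
    ltac:(unfold i0; lia))) as [_ Hnorm].
  eapply Rle_lt_trans; [exact Hnorm|]. apply sqrt_lt_of_lt_sq; [exact He|].
  specialize (HI (S i0) ltac:(unfold i0; lia)). rewrite Rabs_pos_eq in HI by (apply pow_le; lra).
  apply (Rmult_lt_compat_l (4 * c ^ 2 + 1)) in HI; [|pose proof (pow2_ge_0 c); lra].
  replace ((4 * c ^ 2 + 1) * (eps ^ 2 / (4 * c ^ 2 + 1))) with (eps ^ 2) in HI
    by (field; pose proof (pow2_ge_0 c); lra).
  pose proof (pow_lt (/ 2) (S i0) ltac:(lra)). lra.
Qed.

(* At m = p(i), the block of index n is the plateau of bump i, whose block sum is n^i g i. *)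
Lemma blocksum_perturbation_plateau i L0 :
  (forall k, (L0 <= k)%nat -> e k = 0%C) -> (L0 <= i)%nat ->
  blocksum (n ^ bump_exp i) z n = RtoC (INR n ^ i * g i).
Proof.
  intros He0 Hi. unfold blocksum.
  assert (Hw : (0 < n ^ bump_exp i)%nat) by (apply Nat.neq_0_lt_0, Nat.pow_nonzero; lia).
  assert (Hnz : INR n ^ i / INR (n ^ bump_exp i) <> 0).
  { apply Rgt_not_eq, Rdiv_lt_0_compat; [apply pow_lt|]; apply lt_0_INR; lia. }
  rewrite (csum_ext _ (fun _ => RtoC (g i * (INR n ^ i / INR (n ^ bump_exp i))))).
  - rewrite csum_RtoC, rsum_const. f_equal. field. apply Rgt_not_eq, lt_0_INR. lia.
  - intros j Hj. unfold z. rewrite He0.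
    + rewrite (bumps_at n n_ge2 g i), bump_plateau by (auto; rewrite bump_plateau; auto).
      apply Cplus_0_l.
    + pose proof (Nat.pow_gt_lin_r n (bump_exp i) ltac:(lia)). unfold bump_exp in *. nia.
Qed.

Lemma blocksum_perturbation_large delta : 0 < delta ->
  (forall N, exists i, (N <= i)%nat /\ delta <= Rabs (g i)) ->
  forall M0 N0, exists m, (N0 <= m)%nat /\ M0 < H2norm (blocksum (n ^ m) z).
Proof.
  intros Hd Hinf M0 N0. destruct e_finite_zero_sum as [L0 [He0 _]].
  destruct (INR_archimed delta M0 Hd) as [K HK].
  destruct (Hinf (N0 + L0 + K)%nat) as [i [Hi Hgi]].
  exists (bump_exp i). split; [unfold bump_exp; nia|].
  eapply Rlt_le_trans;
    [|apply (Cmod_le_H2norm _ n), blocksum_inH2, perturbation_inH2].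
  rewrite (blocksum_perturbation_plateau i L0) by (auto; lia).
  rewrite Cmod_R, Rabs_mult, Rabs_pos_eq by (apply pow_le, pos_INR).
  assert (INR K + 1 <= INR i + 1) by (pose proof (le_INR K i ltac:(lia)); lra).
  assert (INR i + 1 <= INR n ^ i).
  { pose proof (le_INR _ _ (Nat.pow_gt_lin_r n i ltac:(lia))) as Hlin.
    now rewrite S_INR, pow_INR in Hlin. }
  apply Rlt_le_trans with ((INR K + 1) * delta); [lra|].
  apply Rmult_le_compat; [pose proof (pos_INR K); lra | lra | lra | exact Hgi].
Qed.

End Perturbation.

(** * The chaotic set *)

Definition oscillates_zero_infty (u : nat -> R) : Prop :=
  (forall eps N, 0 < eps -> exists m, (N <= m)%nat /\ u m < eps) /\
  (forall M N, exists m, (N <= m)%nat /\ M < u m).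

Lemma oscillates_LimInf_LimSup u : (forall m, 0 <= u m) -> oscillates_zero_infty u ->
  LimInf_seq u = 0 /\ LimSup_seq u = p_infty.
Proof.
  intros Hu [Hsmall Hlarge]. split.
  - apply is_LimInf_seq_unique. intros eps. split.
    + intros N. destruct (Hsmall eps N (cond_pos eps)) as [m [Hm Hlt]].
      exists m. split; [exact Hm|]. simpl. lra.
    + exists O. intros m _. pose proof (Hu m). pose proof (cond_pos eps). simpl. lra.
  - apply is_LimSup_seq_unique. exact Hlarge.
Qed.

Definition dyadic_offset (i : nat) : nat := i - 2 ^ Nat.log2 i.

Lemma dyadic_offset_pow E j : (j < 2 ^ E)%nat -> dyadic_offset (2 ^ E + j) = j.
Proof.
  intros Hj. unfold dyadic_offset. rewrite (Nat.log2_unique (2 ^ E + j) E); [lia|lia|].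
  rewrite Nat.pow_succ_r'. lia.
Qed.

(* A parameter psi stores t d in its entries 3k+1 and 3k+2, where t = psi 0 and d is finitely
   supported (so psi can be made small while d is not), leaves its entries 3k free, and is itself
   used through [dyadic_offset] as the sequence of bump coefficients. *)
Definition decode (psi : nat -> R) (k : nat) : C :=
  (psi (3 * k + 1)%nat / psi O, psi (3 * k + 2)%nat / psi O).

Definition chaotic_vector (n : nat) (psi : nat -> R) (k : nat) : C :=
  (decode psi k + RtoC (bumps n (fun i => psi (dyadic_offset i)) k))%C.

Definition admissible (psi : nat -> R) : Prop :=
  (exists c, forall j, Rabs (psi j) <= c) /\ finite_zero_sum (decode psi).

Definition chaotic_set (n : nat) (x : nat -> C) : Prop :=
  exists psi, admissible psi /\ x = chaotic_vector n psi.

Definition encode (d : nat -> C) (t : R) (j : nat) : R :=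
  match j with
  | O => t
  | S j' => t * (if Nat.eqb (j' mod 3) 0 then fst (d (j' / 3)%nat)
                 else if Nat.eqb (j' mod 3) 1 then snd (d (j' / 3)%nat) else 0)
  end.

Lemma decode_encode d t : t <> 0 -> decode (encode d t) = d.
Proof.
  intros Ht. apply functional_extensionality. intros k. unfold decode, encode.
  replace (3 * k + 1)%nat with (S (3 * k)) by lia.
  replace (3 * k + 2)%nat with (S (3 * k + 1)) by lia.
  replace ((3 * k) mod 3)%nat with O by (apply Nat.mod_unique with k; lia).
  replace ((3 * k + 1) mod 3)%nat with 1%nat by (apply Nat.mod_unique with k; lia).
  replace ((3 * k) / 3)%nat with k by (apply Nat.div_unique with O; lia).
  replace ((3 * k + 1) / 3)%nat with k by (apply Nat.div_unique with 1%nat; lia).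
  simpl. rewrite surjective_pairing. f_equal; field; exact Ht.
Qed.

Lemma encode_bounded d t B : 0 <= t -> (forall k, Cmod (d k) <= B) ->
  forall j, Rabs (encode d t j) <= t * (1 + B).
Proof.
  intros Ht HB j. assert (0 <= B) by (eapply Rle_trans; [apply Cmod_ge_0 | apply (HB O)]).
  destruct j as [|j]; unfold encode; [rewrite Rabs_pos_eq; nra|].
  rewrite Rabs_mult, (Rabs_pos_eq t) by exact Ht. apply Rmult_le_compat_l; [exact Ht|].
  pose proof (HB (j / 3)%nat). pose proof (Rmax_Cmod (d (j / 3)%nat)).
  pose proof (Rmax_l (Rabs (fst (d (j / 3)%nat))) (Rabs (snd (d (j / 3)%nat)))).
  pose proof (Rmax_r (Rabs (fst (d (j / 3)%nat))) (Rabs (snd (d (j / 3)%nat)))).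
  destruct (Nat.eqb _ 0); [lra|]. destruct (Nat.eqb _ 1); [lra|]. rewrite Rabs_R0. lra.
Qed.

Lemma no_injection_bool_seq_nat (G : (nat -> bool) -> nat) :
  ~ (forall s s', G s = G s' -> s = s').
Proof.
  intros HG.
  set (F := fun k => match excluded_middle_informative (exists s, G s = k) with
                     | left H => proj1_sig (constructive_indefinite_description _ H)
                     | right _ => fun _ => false end).
  set (d := fun k => negb (F k k)).
  assert (HF : F (G d) = d).
  { apply HG. unfold F. destruct (excluded_middle_informative _) as [H|H].
    - exact (proj2_sig (constructive_indefinite_description _ H)).
    - exfalso. apply H. now exists d. }
  assert (Hd : d (G d) = negb (d (G d))) by (unfold d at 1; now rewrite HF).
  destruct (d (G d)); discriminate.
Qed.

Section ChaoticSet.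
Variable n : nat.
Hypothesis n_ge2 : (2 <= n)%nat.

Lemma chaotic_set_inH2 x : chaotic_set n x -> inH2 x.
Proof.
  intros [psi [[[c Hc] Hd] ->]].
  exact (perturbation_inH2 n n_ge2 _ _ c Hd (fun i => Hc _)).
Qed.

Lemma chaotic_vector_pair psi psi' : admissible psi -> admissible psi' -> psi <> psi' ->
  oscillates_zero_infty
    (fun m => H2norm (blocksum (n ^ m) (H2sub (chaotic_vector n psi) (chaotic_vector n psi')))).
Proof.
  intros [[c Hc] Hd] [[c' Hc'] Hd'] Hne.
  destruct (not_all_ex_not _ _ (fun H => Hne (functional_extensionality _ _ H))) as [j0 Hj0].
  set (g := fun i => psi (dyadic_offset i) - psi' (dyadic_offset i)).
  replace (H2sub (chaotic_vector n psi) (chaotic_vector n psi'))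
    with (fun k => (H2sub (decode psi) (decode psi') k + RtoC (bumps n g k))%C).
  2:{ apply functional_extensionality. intros k. unfold H2sub, chaotic_vector, g.
      rewrite bumps_minus, RtoC_minus. ring. }
  assert (Hg : forall i, Rabs (g i) <= c + c').
  { intros i. unfold g. eapply Rle_trans; [apply Rabs_triang|]. rewrite Rabs_Ropp.
    pose proof (Hc (dyadic_offset i)). pose proof (Hc' (dyadic_offset i)). lra. }
  pose proof (finite_zero_sum_sub _ _ Hd Hd') as He. split.
  - intros eps N0 Heps. exact (blocksum_perturbation_small n n_ge2 _ _ _ He Hg eps N0 Heps).
  - apply (blocksum_perturbation_large n n_ge2 _ _ _ He Hg (Rabs (psi j0 - psi' j0))).
    + apply Rabs_pos_lt. lra.
    + intros N. exists (2 ^ (N + j0) + j0)%nat.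
      pose proof (Nat.pow_gt_lin_r 2 (N + j0) ltac:(lia)). split; [lia|].
      unfold g. rewrite dyadic_offset_pow by lia. lra.
Qed.

Lemma chaotic_vector_injective psi psi' : admissible psi -> admissible psi' ->
  chaotic_vector n psi = chaotic_vector n psi' -> psi = psi'.
Proof.
  intros Ha Ha' Heq. apply NNPP. intros Hne.
  destruct (proj2 (chaotic_vector_pair psi psi' Ha Ha' Hne) 0 O) as [m [_ Hm]].
  rewrite Heq in Hm.
  assert (Hzero : forall K, partial_sqnorm (blocksum (n ^ m)
                   (H2sub (chaotic_vector n psi') (chaotic_vector n psi'))) K <= 0).
  { intros K. unfold partial_sqnorm. rewrite rsum_zero; [lra|]. intros k _.
    unfold blocksum. rewrite csum_zero; [rewrite Cmod_0; ring|].
    intros j _. unfold H2sub. ring. }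
  destruct (inH2_partial_sqnorm_bounded _ _ Hzero) as [_ H]. rewrite sqrt_0 in H. lra.
Qed.

Lemma chaotic_set_uncountable : uncountable (chaotic_set n).
Proof.
  intros [h Hh].
  set (psi := fun (s : nat -> bool) j =>
                if Nat.eqb (j mod 3) 0 then (if s (j / 3)%nat then 1 else 0) else 0).
  assert (Hdecode : forall s k, decode (psi s) k = 0%C).
  { intros s k. unfold decode, psi.
    replace ((3 * k + 1) mod 3)%nat with 1%nat by (apply Nat.mod_unique with k; lia).
    replace ((3 * k + 2) mod 3)%nat with 2%nat by (apply Nat.mod_unique with k; lia).
    simpl. unfold Rdiv. now rewrite !Rmult_0_l. }
  assert (Hadm : forall s, admissible (psi s)).
  { intros s. split.
    - exists 1. intros j. unfold psi.
      destruct (Nat.eqb (j mod 3) 0), (s (j / 3)%nat); rewrite ?Rabs_R1, ?Rabs_R0; lra.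
    - exists O. split; [intros; apply Hdecode|]. reflexivity. }
  apply (no_injection_bool_seq_nat (fun s => h (chaotic_vector n (psi s)))).
  intros s s' Hss'. apply Hh in Hss'; [|eexists; split; eauto..].
  apply chaotic_vector_injective in Hss'; auto.
  apply functional_extensionality. intros k.
  assert (E := f_equal (fun f => f (k * 3)%nat) Hss'). cbv beta in E. unfold psi in E.
  rewrite Nat.Div0.mod_mul, Nat.div_mul in E by lia. simpl in E.
  destruct (s k), (s' k); auto; lra.
Qed.

Lemma chaotic_set_dense : dense_in_H2 (chaotic_set n).
Proof.
  split; [exact chaotic_set_inH2|]. intros f Hf eps He.
  destruct (finite_zero_sum_dense f (eps ^ 2 / 8) Hf ltac:(pose proof (pow_lt eps 2 He); lra))
    as [d [Hd Hfd]].
  destruct (finite_zero_sum_bounded d Hd) as [B HB].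
  assert (HB0 : 0 <= B) by (eapply Rle_trans; [apply Cmod_ge_0 | apply (HB O)]).
  set (t := eps / (8 * (1 + B))).
  assert (Ht : 0 < t) by (apply Rdiv_lt_0_compat; lra).
  set (psi := encode d t).
  assert (Hpsi : forall j, Rabs (psi j) <= eps / 8).
  { intros j. replace (eps / 8) with (t * (1 + B)) by (unfold t; field; lra).
    apply encode_bounded; auto; lra. }
  exists (chaotic_vector n psi). split.
  { exists psi. split; [|reflexivity]. split; [now exists (eps / 8)|].
    unfold psi. rewrite decode_encode by lra. exact Hd. }
  set (b := bumps n (fun i => psi (dyadic_offset i))).
  assert (Hsplit : forall K, partial_sqnorm (H2sub f (chaotic_vector n psi)) K
                   <= 2 * partial_sqnorm (H2sub f d) K + 2 * rsum (fun k => b k ^ 2) K).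
  { intros K.
    assert (Hneg : partial_sqnorm (fun k => (- RtoC (b k))%C) K = rsum (fun k => b k ^ 2) K).
    { rewrite <- partial_sqnorm_RtoC. apply rsum_ext. intros; now rewrite Cmod_opp. }
    rewrite <- Hneg.
    replace (H2sub f (chaotic_vector n psi)) with (fun k => (H2sub f d k + - RtoC (b k))%C).
    - apply partial_sqnorm_add_le.
    - apply functional_extensionality. intros k. unfold H2sub, chaotic_vector.
      unfold psi at 1. rewrite decode_encode by lra. fold b. ring. }
  assert (Hbumps : forall K, rsum (fun k => b k ^ 2) K <= 4 * (eps / 8) ^ 2).
  { intros K. pose proof (bumps_energy n n_ge2 _ (eps / 8) 0 0 K (fun i => Hpsi (dyadic_offset i))
      ltac:(lia) ltac:(intros; unfold bump_exp; nia)) as H.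
    rewrite !pow_O, Rmult_1_l, Rmult_1_r in H. exact H. }
  assert (Hbound : forall K, partial_sqnorm (H2sub f (chaotic_vector n psi)) K <= eps ^ 2 / 2).
  { intros K. specialize (Hsplit K). specialize (Hfd K). specialize (Hbumps K). nra. }
  destruct (inH2_partial_sqnorm_bounded _ _ Hbound) as [_ Hnorm].
  eapply Rle_lt_trans; [exact Hnorm|]. apply sqrt_lt_of_lt_sq; [exact He|].
  pose proof (pow_lt eps 2 He). lra.
Qed.

End ChaoticSet.

Theorem mainTheorem16 :
  forall (n : nat), (2 <= n)%nat ->
  forall T : (nat -> C) -> (nat -> C),
    is_adjoint_Wn n T -> densely_LiYorke_chaotic T.
Proof.
  intros n Hn T HT. exists (chaotic_set n).
  split; [now apply chaotic_set_uncountable|]. split; [now apply chaotic_set_dense|].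
  intros x y Hx Hy Hxy.
  assert (Horbit : (fun m => H2norm (H2sub (Nat.iter m T x) (Nat.iter m T y)))
                   = fun m => H2norm (blocksum (n ^ m) (H2sub x y))).
  { apply functional_extensionality. intros m.
    rewrite (adjoint_Wn_iter_sub n T ltac:(lia) HT); auto; now apply (chaotic_set_inH2 n). }
  rewrite Horbit. apply oscillates_LimInf_LimSup; [intros; apply sqrt_pos|].
  destruct Hx as [psi [Hpsi ->]], Hy as [psi' [Hpsi' ->]].
  apply chaotic_vector_pair; auto. intros ->. now apply Hxy.
Qed.
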